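(* Let $(!, \delta, \varepsilon, \Delta, \mathsf{e}, \mathsf{m},\mathsf{m}_K)$ be a monoidal coalgebra modality on an additive symmetric monoidal category $(\mathbb{X}, \otimes, K)$. Then for every object $A$, the symmetric comonoidal monad $(!(A) \otimes -, \mu^{\nabla_A}, \eta^{\mathsf{u}_A}, \mathsf{n}^{\Delta_A}, \mathsf{n}^{\mathsf{e}_A}_K)$ together with the natural transformation $\lambda_X := (\delta_A\otimes 1_{!(X)});\mathsf{m}_{!(A),X} : !(A)\otimes !(X)\to !(!(A)\otimes X)$ is an exponential lifting monad of $(!, \delta, \varepsilon, \Delta, \mathsf{e}, \mathsf{m},\mathsf{m}_K)$.
   Context: Composition is in diagrammatic order; $\alpha,\ell,\rho$ are associator and unitors and $\tau$ the interchange $(A\otimes B)\otimes(C\otimes D)\to(A\otimes C)\otimes(B\otimes D)$. An additive symmetric monoidal category is a symmetric monoidal category whose hom-sets are commutative monoids ($+$, $0$), with composition and $\otimes$ preserving sums and zeros in each argument (no negatives assumed). A monoidal coalgebra modality is a symmetric monoidal comonad $(!,\delta,\varepsilon,\mathsf{m},\mathsf{m}_K)$ ($\mathsf{m}_{A,B}:!(A)\otimes!(B)\to!(A\otimes B)$, $\mathsf{m}_K:K\to!(K)$) with natural cocommutative comonoids $(!(A),\Delta_A,\mathsf{e}_A)$ such that $\delta_A$ is a comonoid morphism and $\Delta,\mathsf{e}$ are monoidal transformations and $!$-coalgebra morphisms. Define $\nabla_A := (\delta_A\otimes\delta_A);\mathsf{m}_{!(A),!(A)};!\big(((\varepsilon_A\otimes\mathsf{e}_A);\rho_A)+((\mathsf{e}_A\otimes\varepsilon_A);\ell_A)\big):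 !(A)\otimes!(A)\to!(A)$ and $\mathsf{u}_A:=\mathsf{m}_K;!(0_{K,A}):K\to!(A)$; then $(!(A),\nabla_A,\mathsf{u}_A,\Delta_A,\mathsf{e}_A)$ is a commutative and cocommutative bimonoid and $((!(A),\delta_A),\nabla_A,\mathsf{u}_A)$ is a monoid in the category of $!$-coalgebras. The monad is $\mu_X=\alpha_{!(A),!(A),X};(\nabla_A\otimes1_X)$, $\eta_X=\ell^{-1}_X;(\mathsf{u}_A\otimes1_X)$, $\mathsf{n}_{X,Y}=(\Delta_A\otimes1_{X\otimes Y});\tau_{!(A),!(A),X,Y}$, $\mathsf{n}_K=\rho_{!(A)};\mathsf{e}_A$. An exponential lifting monad is a symmetric comonoidal monad $(\mathsf{T},\mu,\eta,\mathsf{n},\mathsf{n}_K)$ with a natural $\lambda_X:\mathsf{T}!(X)\to!\mathsf{T}(X)$ satisfying $\mu_{!(X)};\lambda_X=\mathsf{T}(\lambda_X);\lambda_{\mathsf{T}(X)};!(\mu_X)$, $\eta_{!(X)};\lambda_X=!(\eta_X)$, $\mathsf{T}(\delta_X);\lambda_{!(X)};!(\lambda_X)=\lambda_X;\delta_{\mathsf{T}(X)}$, $\lambda_X;\varepsilon_{\mathsf{T}(X)}=\mathsf{T}(\varepsilon_X)$, $\mathsf{n}_{!(X),!(Y)};(\lambda_X\otimes\lambda_Y);\mathsf{m}_{\mathsf{T}(X),\mathsf{T}(Y)}=\mathsf{T}(\mathsf{m}_{X,Y});\lambda_{X\otimes Y};!(\mathsf{n}_{X,Y})$ and $\mathsf{n}_K;\mathsf{m}_K=\mathsf{T}(\mathsf{m}_K);\lambda_K;!(\mathsf{n}_K)$.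 *)

(* Composition is
   written in diagrammatic order: f ;; g means "first f, then g". *)

Record CatData := {
  ob : Type;
  hom : ob -> ob -> Type;
  idm : forall A, hom A A;
  comp : forall A B C, hom A B -> hom B C -> hom A C;
  tob : ob -> ob -> ob;
  tens : forall A B C D, hom A B -> hom C D -> hom (tob A C) (tob B D);
  unitob : ob;
  (* associator alpha_{A,B,C} : A (x) (B (x) C) -> (A (x) B) (x) C
     (the direction used by the paper, cf. the formula for mu) *)
  assoc : forall A B C, hom (tob A (tob B C)) (tob (tob A B) C);
  assoc_inv : forall A B C, hom (tob (tob A B) C) (tob A (tob B C));
  lu : forall A, hom (tob unitob A) A;
  lu_inv : forall A, hom A (tob unitob A);
  ru : forall A, hom (tob A unitob) A;
  ru_inv : forall A, hom A (tob A unitob);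
  sym : forall A B, hom (tob A B) (tob B A);
  plus : forall A B, hom A B -> hom A B -> hom A B;
  zero : forall A B, hom A B }.

Arguments hom {c} A B.
Arguments idm {c} A.
Arguments comp {c A B C} f g.
Arguments tob {c} A B.
Arguments tens {c A B C D} f g.
Arguments unitob {c}.
Arguments assoc {c} A B C.
Arguments assoc_inv {c} A B C.
Arguments lu {c} A.
Arguments lu_inv {c} A.
Arguments ru {c} A.
Arguments ru_inv {c} A.
Arguments sym {c} A B.
Arguments plus {c A B} f g.
Arguments zero {c} A B.

Declare Scope cat_scope.
Delimit Scope cat_scope with cat.
Open Scope cat_scope.
Notation "f ;; g" := (comp f g) (at level 45, left associativity) : cat_scope.
Notation "A ⊗ B" := (tob A B) (at level 38, left associativity) : cat_scope.
Notation "f ⊠ g" := (tens f g) (at level 38, left associativity) : cat_scope.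
Notation "f ⊕ g" := (plus f g) (at level 50, left associativity) : cat_scope.

(* The axioms of an additive symmetric monoidal category
   (hom-sets are commutative monoids, no negatives). *)
Record ASMC_axioms (C : CatData) : Prop := {
  comp_idl : forall (A B : ob C) (f : hom A B), idm A ;; f = f;
  comp_idr : forall (A B : ob C) (f : hom A B), f ;; idm B = f;
  comp_assoc : forall (A B D E : ob C) (f : hom A B) (g : hom B D) (h : hom D E),
      (f ;; g) ;; h = f ;; (g ;; h);
  tens_id : forall A B : ob C, idm A ⊠ idm B = idm (A ⊗ B);
  tens_comp : forall (A1 A2 A3 B1 B2 B3 : ob C) (f : hom A1 A2) (f' : hom A2 A3)
      (g : hom B1 B2) (g' : hom B2 B3), (f ;; f') ⊠ (g ;; g') = (f ⊠ g) ;; (f' ⊠ g');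
  assoc_nat : forall (A A' B B' D D' : ob C) (f : hom A A') (g : hom B B') (h : hom D D'),
      (f ⊠ (g ⊠ h)) ;; assoc A' B' D' = assoc A B D ;; ((f ⊠ g) ⊠ h);
  lu_nat : forall (A B : ob C) (f : hom A B), (idm unitob ⊠ f) ;; lu B = lu A ;; f;
  ru_nat : forall (A B : ob C) (f : hom A B), (f ⊠ idm unitob) ;; ru B = ru A ;; f;
  sym_nat : forall (A A' B B' : ob C) (f : hom A A') (g : hom B B'),
      (f ⊠ g) ;; sym A' B' = sym A B ;; (g ⊠ f);
  assoc_iso1 : forall A B D : ob C, assoc A B D ;; assoc_inv A B D = idm _;
  assoc_iso2 : forall A B D : ob C, assoc_inv A B D ;; assoc A B D = idm _;
  lu_iso1 : forall A : ob C, lu A ;; lu_inv A = idm _;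
  lu_iso2 : forall A : ob C, lu_inv A ;; lu A = idm _;
  ru_iso1 : forall A : ob C, ru A ;; ru_inv A = idm _;
  ru_iso2 : forall A : ob C, ru_inv A ;; ru A = idm _;
  sym_inv : forall A B : ob C, sym A B ;; sym B A = idm _;
  pentagon : forall A B D E : ob C,
      assoc A B (D ⊗ E) ;; assoc (A ⊗ B) D E
      = (idm A ⊠ assoc B D E) ;; assoc A (B ⊗ D) E ;; (assoc A B D ⊠ idm E);
  triangle : forall A B : ob C,
      assoc A unitob B ;; (ru A ⊠ idm B) = idm A ⊠ lu B;
  hexagon : forall A B D : ob C,
      assoc A B D ;; sym (A ⊗ B) D ;; assoc D A B
      = (idm A ⊠ sym B D) ;; assoc A D B ;; (sym A D ⊠ idm B);
  plus_assoc : forall (A B : ob C) (f g h : hom A B), (f ⊕ g) ⊕ h = f ⊕ (g ⊕ h);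
  plus_comm : forall (A B : ob C) (f g : hom A B), f ⊕ g = g ⊕ f;
  plus_zero : forall (A B : ob C) (f : hom A B), f ⊕ zero A B = f;
  comp_plusl : forall (A B D : ob C) (f g : hom A B) (h : hom B D),
      (f ⊕ g) ;; h = (f ;; h) ⊕ (g ;; h);
  comp_plusr : forall (A B D : ob C) (h : hom A B) (f g : hom B D),
      h ;; (f ⊕ g) = (h ;; f) ⊕ (h ;; g);
  comp_zerol : forall (A B D : ob C) (h : hom B D), zero A B ;; h = zero A D;
  comp_zeror : forall (A B D : ob C) (h : hom A B), h ;; zero B D = zero A D;
  tens_plusl : forall (A B A' B' : ob C) (f g : hom A B) (h : hom A' B'),
      (f ⊕ g) ⊠ h = (f ⊠ h) ⊕ (g ⊠ h);
  tens_plusr : forall (A B A' B' : ob C) (h : hom A B) (f g : hom A' B'),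
      h ⊠ (f ⊕ g) = (h ⊠ f) ⊕ (h ⊠ g);
  tens_zerol : forall (A B A' B' : ob C) (h : hom A' B'),
      zero A B ⊠ h = zero (A ⊗ A') (B ⊗ B');
  tens_zeror : forall (A B A' B' : ob C) (h : hom A B),
      h ⊠ zero A' B' = zero (A ⊗ A') (B ⊗ B') }.

Record ASMC := { asmc_data :> CatData; asmc_ax : ASMC_axioms asmc_data }.

Definition tau {C : CatData} (A B D E : ob C)
  : hom ((A ⊗ B) ⊗ (D ⊗ E)) ((A ⊗ D) ⊗ (B ⊗ E)) :=
  assoc_inv A B (D ⊗ E) ;; (idm A ⊠ assoc B D E) ;; (idm A ⊠ (sym B D ⊠ idm E))
  ;; (idm A ⊠ assoc_inv D B E) ;; assoc A D (B ⊗ E).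

Record MCMData (C : CatData) := {
  bo : ob C -> ob C;
  bm : forall A B, hom A B -> hom (bo A) (bo B);
  dlt : forall A, hom (bo A) (bo (bo A));
  eps : forall A, hom (bo A) A;
  mm : forall A B, hom (bo A ⊗ bo B) (bo (A ⊗ B));
  mK : hom unitob (bo unitob);
  Dl : forall A, hom (bo A) (bo A ⊗ bo A);
  ee : forall A, hom (bo A) unitob }.

Arguments bo {C} m A.
Arguments bm {C} m {A B} f.
Arguments dlt {C} m A.
Arguments eps {C} m A.
Arguments mm {C} m A B.
Arguments mK {C} m.
Arguments Dl {C} m A.
Arguments ee {C} m A.

Record MCM_axioms (C : CatData) (M : MCMData C) : Prop := {
  bm_id : forall A, bm M (idm A) = idm (bo M A);
  bm_comp : forall (A B D : ob C) (f : hom A B) (g : hom B D),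
      bm M (f ;; g) = bm M f ;; bm M g;
  dlt_nat : forall (A B : ob C) (f : hom A B),
      dlt M A ;; bm M (bm M f) = bm M f ;; dlt M B;
  eps_nat : forall (A B : ob C) (f : hom A B), eps M A ;; f = bm M f ;; eps M B;
  comonad_counit1 : forall A, dlt M A ;; eps M (bo M A) = idm (bo M A);
  comonad_counit2 : forall A, dlt M A ;; bm M (eps M A) = idm (bo M A);
  comonad_coassoc : forall A, dlt M A ;; dlt M (bo M A) = dlt M A ;; bm M (dlt M A);
  mm_nat : forall (A A' B B' : ob C) (f : hom A A') (g : hom B B'),
      (bm M f ⊠ bm M g) ;; mm M A' B' = mm M A B ;; bm M (f ⊠ g);
  mm_assoc : forall A B D : ob C,
      (idm (bo M A) ⊠ mm M B D) ;; mm M A (B ⊗ D) ;; bm M (assoc A B D)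
      = assoc (bo M A) (bo M B) (bo M D) ;; (mm M A B ⊠ idm (bo M D)) ;; mm M (A ⊗ B) D;
  mm_lunit : forall A : ob C,
      (mK M ⊠ idm (bo M A)) ;; mm M unitob A ;; bm M (lu A) = lu (bo M A);
  mm_runit : forall A : ob C,
      (idm (bo M A) ⊠ mK M) ;; mm M A unitob ;; bm M (ru A) = ru (bo M A);
  mm_sym : forall A B : ob C,
      sym (bo M A) (bo M B) ;; mm M B A = mm M A B ;; bm M (sym A B);
  dlt_mon : forall A B : ob C,
      mm M A B ;; dlt M (A ⊗ B)
      = (dlt M A ⊠ dlt M B) ;; mm M (bo M A) (bo M B) ;; bm M (mm M A B);
  dlt_monK : mK M ;; dlt M unitob = mK M ;; bm M (mK M);
  eps_mon : forall A B : ob C, mm M A B ;; eps M (A ⊗ B) = eps M A ⊠ eps M B;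
  eps_monK : mK M ;; eps M unitob = idm unitob;
  Dl_nat : forall (A B : ob C) (f : hom A B),
      bm M f ;; Dl M B = Dl M A ;; (bm M f ⊠ bm M f);
  ee_nat : forall (A B : ob C) (f : hom A B), bm M f ;; ee M B = ee M A;
  comonoid_coassoc : forall A : ob C,
      Dl M A ;; (idm (bo M A) ⊠ Dl M A) ;; assoc _ _ _ = Dl M A ;; (Dl M A ⊠ idm (bo M A));
  comonoid_lcounit : forall A : ob C,
      Dl M A ;; (ee M A ⊠ idm (bo M A)) ;; lu (bo M A) = idm (bo M A);
  comonoid_rcounit : forall A : ob C,
      Dl M A ;; (idm (bo M A) ⊠ ee M A) ;; ru (bo M A) = idm (bo M A);
  comonoid_cocomm : forall A : ob C, Dl M A ;; sym (bo M A) (bo M A) = Dl M A;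
  dlt_Dl : forall A : ob C, dlt M A ;; Dl M (bo M A) = Dl M A ;; (dlt M A ⊠ dlt M A);
  dlt_ee : forall A : ob C, dlt M A ;; ee M (bo M A) = ee M A;
  Dl_mon : forall A B : ob C,
      mm M A B ;; Dl M (A ⊗ B)
      = (Dl M A ⊠ Dl M B) ;; tau _ _ _ _ ;; (mm M A B ⊠ mm M A B);
  Dl_monK : mK M ;; Dl M unitob = lu_inv unitob ;; (mK M ⊠ mK M);
  ee_mon : forall A B : ob C, mm M A B ;; ee M (A ⊗ B) = (ee M A ⊠ ee M B) ;; lu unitob;
  ee_monK : mK M ;; ee M unitob = idm unitob;
  Dl_coalg : forall A : ob C,
      Dl M A ;; (dlt M A ⊠ dlt M A) ;; mm M (bo M A) (bo M A) = dlt M A ;; bm M (Dl M A);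
  ee_coalg : forall A : ob C, ee M A ;; mK M = dlt M A ;; bm M (ee M A) }.

Record MCM (C : CatData) := { mcm_data :> MCMData C; mcm_ax : MCM_axioms C mcm_data }.

Record sym_comonoidal_monad (C : CatData) (T : ob C -> ob C)
    (Tm : forall A B, hom A B -> hom (T A) (T B))
    (mu : forall X, hom (T (T X)) (T X)) (eta : forall X, hom X (T X))
    (n : forall X Y, hom (T (X ⊗ Y)) (T X ⊗ T Y)) (nK : hom (T unitob) unitob) : Prop := {
  T_id : forall X, Tm X X (idm X) = idm (T X);
  T_comp : forall (X Y Z : ob C) (f : hom X Y) (g : hom Y Z),
      Tm X Z (f ;; g) = Tm X Y f ;; Tm Y Z g;
  mu_nat : forall (X Y : ob C) (f : hom X Y),
      Tm _ _ (Tm _ _ f) ;; mu Y = mu X ;; Tm _ _ f;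
  eta_nat : forall (X Y : ob C) (f : hom X Y), f ;; eta Y = eta X ;; Tm _ _ f;
  monad_assoc : forall X, Tm _ _ (mu X) ;; mu X = mu (T X) ;; mu X;
  monad_unit1 : forall X, eta (T X) ;; mu X = idm (T X);
  monad_unit2 : forall X, Tm _ _ (eta X) ;; mu X = idm (T X);
  n_nat : forall (X X' Y Y' : ob C) (f : hom X X') (g : hom Y Y'),
      Tm _ _ (f ⊠ g) ;; n X' Y' = n X Y ;; (Tm _ _ f ⊠ Tm _ _ g);
  n_coassoc : forall X Y Z : ob C,
      Tm _ _ (assoc X Y Z) ;; n (X ⊗ Y) Z ;; (n X Y ⊠ idm (T Z))
      = n X (Y ⊗ Z) ;; (idm (T X) ⊠ n Y Z) ;; assoc (T X) (T Y) (T Z);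
  n_lcounit : forall X : ob C,
      n unitob X ;; (nK ⊠ idm (T X)) ;; lu (T X) = Tm _ _ (lu X);
  n_rcounit : forall X : ob C,
      n X unitob ;; (idm (T X) ⊠ nK) ;; ru (T X) = Tm _ _ (ru X);
  n_sym : forall X Y : ob C, n X Y ;; sym (T X) (T Y) = Tm _ _ (sym X Y) ;; n Y X;
  mu_comon : forall X Y : ob C,
      mu (X ⊗ Y) ;; n X Y = Tm _ _ (n X Y) ;; n (T X) (T Y) ;; (mu X ⊠ mu Y);
  mu_comonK : mu unitob ;; nK = Tm _ _ nK ;; nK;
  eta_comon : forall X Y : ob C, eta (X ⊗ Y) ;; n X Y = eta X ⊠ eta Y;
  eta_comonK : eta unitob ;; nK = idm unitob }.

Record exponential_lifting_monad (C : CatData) (M : MCMData C) (T : ob C -> ob C)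
    (Tm : forall A B, hom A B -> hom (T A) (T B))
    (mu : forall X, hom (T (T X)) (T X)) (eta : forall X, hom X (T X))
    (n : forall X Y, hom (T (X ⊗ Y)) (T X ⊗ T Y)) (nK : hom (T unitob) unitob)
    (lam : forall X, hom (T (bo M X)) (bo M (T X))) : Prop := {
  elm_scm : sym_comonoidal_monad C T Tm mu eta n nK;
  lam_nat : forall (X Y : ob C) (f : hom X Y),
      Tm _ _ (bm M f) ;; lam Y = lam X ;; bm M (Tm _ _ f);
  lam_mu : forall X, mu (bo M X) ;; lam X = Tm _ _ (lam X) ;; lam (T X) ;; bm M (mu X);
  lam_eta : forall X, eta (bo M X) ;; lam X = bm M (eta X);
  lam_dlt : forall X,
      Tm _ _ (dlt M X) ;; lam (bo M X) ;; bm M (lam X) = lam X ;; dlt M (T X);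
  lam_eps : forall X, lam X ;; eps M (T X) = Tm _ _ (eps M X);
  lam_mm : forall X Y,
      n (bo M X) (bo M Y) ;; (lam X ⊠ lam Y) ;; mm M (T X) (T Y)
      = Tm _ _ (mm M X Y) ;; lam (X ⊗ Y) ;; bm M (n X Y);
  lam_mK : nK ;; mK M = Tm _ _ (mK M) ;; lam unitob ;; bm M nK }.

Section Prop75Data.
Context {C : CatData} (M : MCMData C) (A : ob C).

Definition nablaA : hom (bo M A ⊗ bo M A) (bo M A) :=
  (dlt M A ⊠ dlt M A) ;; mm M (bo M A) (bo M A)
  ;; bm M (((eps M A ⊠ ee M A) ;; ru A) ⊕ ((ee M A ⊠ eps M A) ;; lu A)).

Definition uA : hom unitob (bo M A) := mK M ;; bm M (zero unitob A).

Definition TA (X : ob C) : ob C := bo M A ⊗ X.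
Definition TmA (X Y : ob C) (f : hom X Y) : hom (TA X) (TA Y) := idm (bo M A) ⊠ f.
Definition muA (X : ob C) : hom (TA (TA X)) (TA X) :=
  assoc (bo M A) (bo M A) X ;; (nablaA ⊠ idm X).
Definition etaA (X : ob C) : hom X (TA X) := lu_inv X ;; (uA ⊠ idm X).
Definition nA (X Y : ob C) : hom (TA (X ⊗ Y)) (TA X ⊗ TA Y) :=
  (Dl M A ⊠ idm (X ⊗ Y)) ;; tau (bo M A) (bo M A) X Y.
Definition nKA : hom (TA unitob) unitob := ru (bo M A) ;; ee M A.
Definition lamA (X : ob C) : hom (TA (bo M X)) (bo M (TA X)) :=
  (dlt M A ⊠ idm (bo M X)) ;; mm M (bo M A) X.
End Prop75Data.

Arguments mcm_data {C} m.
Arguments mcm_ax {C} m.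

From Stdlib Require Import List.
Import ListNotations.

(* The monad structure of !A ⊗ - comes from the monoid (!A, ∇, u) and its
   comonoidal structure from the comonoid (!A, Δ, e), so the axioms of a
   symmetric comonoidal monad reduce to the bimonoid laws of !A. Since ∇ and u
   are !-coalgebra morphisms, ∇ is determined by ∇ ; ε = ε⊗e + e⊗ε (up to
   unitors): associativity of ∇ becomes an identity between two sums of the
   three terms ε⊗e⊗e, e⊗ε⊗e, e⊗e⊗ε, and the unit laws follow from u ; ε = 0 and
   u ; e = 1. The bimonoid law ∇ ; Δ = (Δ⊗Δ) ; τ ; (∇⊗∇) holds because Δ is a
   monoidal transformation and δ a comonoid morphism. The axioms for
   λ = (δ⊗1) ; m follow from the comonad laws, the monoidality of δ and ε, and
   the fact that Δ and e are coalgebra morphisms. *)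

(** * Additive symmetric monoidal categories *)

Section MonoidalAxioms.
Context {C : ASMC}.
Local Notation ax := (asmc_ax C).
Implicit Types A B D E : ob C.

Lemma comp_idlE {A B} (f : hom A B) : idm A ;; f = f.
Proof. exact (comp_idl _ ax _ _ f). Qed.
Lemma comp_idrE {A B} (f : hom A B) : f ;; idm B = f.
Proof. exact (comp_idr _ ax _ _ f). Qed.
Lemma comp_assocE {A B D E} (f : hom A B) (g : hom B D) (h : hom D E) :
  (f ;; g) ;; h = f ;; (g ;; h).
Proof. exact (comp_assoc _ ax _ _ _ _ f g h). Qed.
Lemma tens_idE A B : idm A ⊠ idm B = idm (A ⊗ B).
Proof. exact (tens_id _ ax A B). Qed.
Lemma tens_compE {A1 A2 A3 B1 B2 B3 : ob C} (f : hom A1 A2) (f' : hom A2 A3)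
    (g : hom B1 B2) (g' : hom B2 B3) :
  (f ;; f') ⊠ (g ;; g') = (f ⊠ g) ;; (f' ⊠ g').
Proof. exact (tens_comp _ ax _ _ _ _ _ _ f f' g g'). Qed.
Lemma assoc_natE {A A' B B' D D' : ob C} (f : hom A A') (g : hom B B') (h : hom D D') :
  (f ⊠ (g ⊠ h)) ;; assoc A' B' D' = assoc A B D ;; ((f ⊠ g) ⊠ h).
Proof. exact (assoc_nat _ ax _ _ _ _ _ _ f g h). Qed.
Lemma lu_natE {A B} (f : hom A B) : (idm unitob ⊠ f) ;; lu B = lu A ;; f.
Proof. exact (lu_nat _ ax _ _ f). Qed.
Lemma ru_natE {A B} (f : hom A B) : (f ⊠ idm unitob) ;; ru B = ru A ;; f.
Proof. exact (ru_nat _ ax _ _ f). Qed.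
Lemma sym_natE {A A' B B' : ob C} (f : hom A A') (g : hom B B') :
  (f ⊠ g) ;; sym A' B' = sym A B ;; (g ⊠ f).
Proof. exact (sym_nat _ ax _ _ _ _ f g). Qed.
Lemma assocK A B D : assoc A B D ;; assoc_inv A B D = idm _.
Proof. exact (assoc_iso1 _ ax A B D). Qed.
Lemma assoc_invK A B D : assoc_inv A B D ;; assoc A B D = idm _.
Proof. exact (assoc_iso2 _ ax A B D). Qed.
Lemma luK A : lu A ;; lu_inv A = idm _.
Proof. exact (lu_iso1 _ ax A). Qed.
Lemma lu_invK A : lu_inv A ;; lu A = idm _.
Proof. exact (lu_iso2 _ ax A). Qed.
Lemma ruK A : ru A ;; ru_inv A = idm _.
Proof. exact (ru_iso1 _ ax A). Qed.
Lemma ru_invK A : ru_inv A ;; ru A = idm _.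
Proof. exact (ru_iso2 _ ax A). Qed.
Lemma symK A B : sym A B ;; sym B A = idm _.
Proof. exact (sym_inv _ ax A B). Qed.
Lemma pentagonE A B D E :
  assoc A B (D ⊗ E) ;; assoc (A ⊗ B) D E
  = (idm A ⊠ assoc B D E) ;; (assoc A (B ⊗ D) E ;; (assoc A B D ⊠ idm E)).
Proof. rewrite (pentagon _ ax). apply comp_assocE. Qed.
Lemma triangleE A B : assoc A unitob B ;; (ru A ⊠ idm B) = idm A ⊠ lu B.
Proof. exact (triangle _ ax A B). Qed.
Lemma hexagonE A B D :
  assoc A B D ;; (sym (A ⊗ B) D ;; assoc D A B)
  = (idm A ⊠ sym B D) ;; (assoc A D B ;; (sym A D ⊠ idm B)).
Proof. rewrite <- comp_assocE, (hexagon _ ax). apply comp_assocE. Qed.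

Lemma plus_assocE {A B} (f g h : hom A B) : (f ⊕ g) ⊕ h = f ⊕ (g ⊕ h).
Proof. exact (plus_assoc _ ax _ _ f g h). Qed.
Lemma plus0r {A B} (f : hom A B) : f ⊕ zero A B = f.
Proof. exact (plus_zero _ ax _ _ f). Qed.
Lemma plus0l {A B} (f : hom A B) : zero A B ⊕ f = f.
Proof. rewrite (plus_comm _ ax). apply plus0r. Qed.
Lemma compDl {A B D} (f g : hom A B) (h : hom B D) : (f ⊕ g) ;; h = (f ;; h) ⊕ (g ;; h).
Proof. exact (comp_plusl _ ax _ _ _ f g h). Qed.
Lemma compDr {A B D} (h : hom A B) (f g : hom B D) : h ;; (f ⊕ g) = (h ;; f) ⊕ (h ;; g).
Proof. exact (comp_plusr _ ax _ _ _ h f g). Qed.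
Lemma comp0l {A B D} (h : hom B D) : zero A B ;; h = zero A D.
Proof. exact (comp_zerol _ ax _ _ _ h). Qed.
Lemma tensDl {A B A' B' : ob C} (f g : hom A B) (h : hom A' B') :
  (f ⊕ g) ⊠ h = (f ⊠ h) ⊕ (g ⊠ h).
Proof. exact (tens_plusl _ ax _ _ _ _ f g h). Qed.
Lemma tensDr {A B A' B' : ob C} (h : hom A B) (f g : hom A' B') :
  h ⊠ (f ⊕ g) = (h ⊠ f) ⊕ (h ⊠ g).
Proof. exact (tens_plusr _ ax _ _ _ _ h f g). Qed.
Lemma tens0l {A B A' B' : ob C} (h : hom A' B') : zero A B ⊠ h = zero (A ⊗ A') (B ⊗ B').
Proof. exact (tens_zerol _ ax _ _ _ _ h). Qed.
Lemma tens0r {A B A' B' : ob C} (h : hom A B) : h ⊠ zero A' B' = zero (A ⊗ A') (B ⊗ B').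
Proof. exact (tens_zeror _ ax _ _ _ _ h). Qed.

Lemma comp_eq2 {A B D} {f : hom A B} {g : hom B D} {h : hom A D} :
  f ;; g = h -> forall E (k : hom D E), f ;; (g ;; k) = h ;; k.
Proof. intros H E k. rewrite <- comp_assocE, H. reflexivity. Qed.
Lemma comp_eq3 {A B D E} {f : hom A B} {g : hom B D} {h : hom D E} {r : hom A E} :
  f ;; (g ;; h) = r -> forall F (k : hom E F), f ;; (g ;; (h ;; k)) = r ;; k.
Proof. intros H F k. rewrite <- (comp_assocE g h k). exact (comp_eq2 H F k). Qed.
Lemma comp_eq4 {A B D E G} {f : hom A B} {g : hom B D} {h : hom D E} {i : hom E G}
    {r : hom A G} :
  f ;; (g ;; (h ;; i)) = r -> forall F (k : hom G F), f ;; (g ;; (h ;; (i ;; k))) = r ;; k.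
Proof. intros H F k. rewrite <- (comp_assocE h i k). exact (comp_eq3 H F k). Qed.
Lemma comp_eq5 {A B D E G H} {f : hom A B} {g : hom B D} {h : hom D E} {i : hom E G}
    {j : hom G H} {r : hom A H} :
  f ;; (g ;; (h ;; (i ;; j))) = r ->
  forall F (k : hom H F), f ;; (g ;; (h ;; (i ;; (j ;; k)))) = r ;; k.
Proof. intros Hr F k. rewrite <- (comp_assocE i j k). exact (comp_eq4 Hr F k). Qed.
End MonoidalAxioms.

Ltac reassoc := repeat rewrite comp_assocE.
Ltac reassoc_in P := repeat rewrite comp_assocE in P.

Ltac instantiate_all H := lazymatch type of H with
  | forall _, _ => let H2 := fresh in epose proof (H _) as H2; clear H; rename H2 into H;
                   instantiate_all H
  | _ => idtac end.

(* [rw H] rewrites with an equation whose left side is a right-nested composite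
   of up to five maps, also when it occurs inside a longer right-nested
   composite, and then reassociates everything to the right. *)
Ltac rewrite_in_chain H := first
  [ rewrite H | rewrite (comp_eq2 H) | rewrite (comp_eq3 H)
  | rewrite (comp_eq4 H) | rewrite (comp_eq5 H) ].
Ltac rewrite_in_chain_hyp H P := first
  [ rewrite H in P | rewrite (comp_eq2 H) in P | rewrite (comp_eq3 H) in P
  | rewrite (comp_eq4 H) in P | rewrite (comp_eq5 H) in P ].
Tactic Notation "rw" open_constr(H) :=
  let H' := fresh in epose proof H as H'; instantiate_all H';
  rewrite_in_chain H'; clear H'; reassoc.
Tactic Notation "rw" "<-" open_constr(H) :=
  let H' := fresh in epose proof H as H'; instantiate_all H';
  rewrite_in_chain (eq_sym H'); clear H'; reassoc.
Tactic Notation "rw" open_constr(H) "in" hyp(P) :=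
  let H' := fresh in epose proof H as H'; instantiate_all H';
  rewrite_in_chain_hyp H' P; clear H'; reassoc_in P.
Tactic Notation "rw" "<-" open_constr(H) "in" hyp(P) :=
  let H' := fresh in epose proof H as H'; instantiate_all H';
  rewrite_in_chain_hyp (eq_sym H') P; clear H'; reassoc_in P.

Ltac cancel_isos := reassoc; repeat first
  [ rw assocK | rw assoc_invK | rw luK | rw lu_invK | rw ruK | rw ru_invK | rw symK
  | rewrite comp_idlE | rewrite comp_idrE ].

Section MonoidalBasics.
Context {C : ASMC}.
Implicit Types A B D E : ob C.

Lemma postcomp_inj {A B D} (i : hom B D) (j : hom D B) :
  i ;; j = idm B -> forall f g : hom A B, f ;; i = g ;; i -> f = g.
Proof.
  intros H f g E.
  rewrite <- (comp_idrE f), <- (comp_idrE g), <- H, <- !comp_assocE, E. reflexivity.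
Qed.
Lemma precomp_inj {A B D} (i : hom A B) (j : hom B A) :
  j ;; i = idm B -> forall f g : hom B D, i ;; f = i ;; g -> f = g.
Proof.
  intros H f g E.
  rewrite <- (comp_idlE f), <- (comp_idlE g), <- H, !comp_assocE, E. reflexivity.
Qed.

Lemma whiskerl_comp {A B D E} (f : hom B D) (g : hom D E) :
  idm A ⊠ (f ;; g) = (idm A ⊠ f) ;; (idm A ⊠ g).
Proof. rewrite <- tens_compE, comp_idlE. reflexivity. Qed.
Lemma whiskerr_comp {A B D E} (f : hom B D) (g : hom D E) :
  (f ;; g) ⊠ idm A = (f ⊠ idm A) ;; (g ⊠ idm A).
Proof. rewrite <- tens_compE, comp_idlE. reflexivity. Qed.
Lemma whiskerl_eq {A B D E} (W : ob C) {f : hom A B} {g : hom B E} {h : hom A D}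
    {k : hom D E} :
  f ;; g = h ;; k -> (idm W ⊠ f) ;; (idm W ⊠ g) = (idm W ⊠ h) ;; (idm W ⊠ k).
Proof. intro H. rewrite <- !tens_compE, H. reflexivity. Qed.
Lemma whiskerl_idm {A B} (W : ob C) {f : hom A B} {g : hom B A} :
  f ;; g = idm A -> (idm W ⊠ f) ;; (idm W ⊠ g) = idm _.
Proof. intro H. rewrite <- tens_compE, H, comp_idlE, tens_idE. reflexivity. Qed.
Lemma tens_comp_l {A B D E F} (f : hom A B) (g : hom B D) (h : hom E F) :
  (f ;; g) ⊠ h = (f ⊠ h) ;; (g ⊠ idm F).
Proof. rewrite <- tens_compE, comp_idrE. reflexivity. Qed.
Lemma tens_comp_r {A B D E F} (f : hom E F) (g : hom A B) (h : hom B D) :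
  f ⊠ (g ;; h) = (f ⊠ g) ;; (idm F ⊠ h).
Proof. rewrite <- tens_compE, comp_idrE. reflexivity. Qed.
Lemma tens_split_l {A A' B B'} (f : hom A A') (g : hom B B') :
  f ⊠ g = (f ⊠ idm B) ;; (idm A' ⊠ g).
Proof. rewrite <- tens_compE, comp_idlE, comp_idrE. reflexivity. Qed.
Lemma tens_split_r {A A' B B'} (f : hom A A') (g : hom B B') :
  f ⊠ g = (idm A ⊠ g) ;; (f ⊠ idm B').
Proof. rewrite <- tens_compE, comp_idlE, comp_idrE. reflexivity. Qed.
Lemma whisker_exchange {A A' B B'} (f : hom A A') (g : hom B B') :
  (f ⊠ idm B) ;; (idm A' ⊠ g) = (idm A ⊠ g) ;; (f ⊠ idm B').
Proof. rewrite <- tens_split_l. apply tens_split_r. Qed.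

Lemma lu_whisker_inj {A B} (f g : hom A B) : idm unitob ⊠ f = idm unitob ⊠ g -> f = g.
Proof.
  intro E. apply (precomp_inj (lu A) (lu_inv A) (lu_invK A)).
  rewrite <- !lu_natE, E. reflexivity.
Qed.
Lemma ru_whisker_inj {A B} (f g : hom A B) : f ⊠ idm unitob = g ⊠ idm unitob -> f = g.
Proof.
  intro E. apply (precomp_inj (ru A) (ru_inv A) (ru_invK A)).
  rewrite <- !ru_natE, E. reflexivity.
Qed.

Lemma assoc_inv_natE {A A' B B' D D'} (f : hom A A') (g : hom B B') (h : hom D D') :
  ((f ⊠ g) ⊠ h) ;; assoc_inv A' B' D' = assoc_inv A B D ;; (f ⊠ (g ⊠ h)).
Proof.
  apply (precomp_inj (assoc A B D) _ (assoc_invK _ _ _)).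
  rw <- assoc_natE. cancel_isos. reflexivity.
Qed.
Lemma lu_inv_natE {A B} (f : hom A B) : f ;; lu_inv B = lu_inv A ;; (idm unitob ⊠ f).
Proof.
  apply (postcomp_inj (lu B) (lu_inv B) (luK _)).
  reassoc. rewrite lu_natE. cancel_isos. reflexivity.
Qed.
Lemma ru_inv_natE {A B} (f : hom A B) : f ;; ru_inv B = ru_inv A ;; (f ⊠ idm unitob).
Proof.
  apply (postcomp_inj (ru B) (ru_inv B) (ruK _)).
  reassoc. rewrite ru_natE. cancel_isos. reflexivity.
Qed.

Lemma pentagon_inv A B D E :
  assoc_inv (A ⊗ B) D E ;; assoc_inv A B (D ⊗ E)
  = (assoc_inv A B D ⊠ idm E) ;; (assoc_inv A (B ⊗ D) E ;; (idm A ⊠ assoc_inv B D E)).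
Proof.
  apply (precomp_inj (assoc (A ⊗ B) D E) _ (assoc_invK _ _ _)).
  apply (precomp_inj (assoc A B (D ⊗ E)) _ (assoc_invK _ _ _)).
  cancel_isos. rw pentagonE. cancel_isos.
  rw <- tens_compE. rw assocK. rewrite comp_idlE, tens_idE. cancel_isos.
  rw <- tens_compE. rw assocK. rewrite comp_idlE, tens_idE. reflexivity.
Qed.
Lemma pentagon_inv_mixed A B D E :
  assoc_inv A (B ⊗ D) E ;; (idm A ⊠ assoc_inv B D E)
  = (assoc A B D ⊠ idm E) ;; (assoc_inv (A ⊗ B) D E ;; assoc_inv A B (D ⊗ E)).
Proof.
  apply (precomp_inj (assoc_inv A B D ⊠ idm E) (assoc A B D ⊠ idm E)).
  { rewrite <- tens_compE, assocK, comp_idlE, tens_idE. reflexivity. }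
  rewrite pentagon_inv. reassoc.
  rw <- tens_compE. rw assoc_invK. rewrite comp_idlE, tens_idE, comp_idlE. reflexivity.
Qed.
Lemma pentagon_mixed A B D E :
  assoc A (B ⊗ D) E ;; (assoc A B D ⊠ idm E)
  = (idm A ⊠ assoc_inv B D E) ;; (assoc A B (D ⊗ E) ;; assoc (A ⊗ B) D E).
Proof.
  rewrite pentagonE. rw <- tens_compE. rw assoc_invK.
  rewrite comp_idlE, tens_idE, comp_idlE. reflexivity.
Qed.
Lemma pentagon_assoc_conj A B D E :
  assoc (A ⊗ B) D E ;; ((assoc_inv A B D ⊠ idm E) ;; assoc_inv A (B ⊗ D) E)
  = assoc_inv A B (D ⊗ E) ;; (idm A ⊠ assoc B D E).
Proof.
  apply (postcomp_inj (idm A ⊠ assoc_inv B D E) (idm A ⊠ assoc B D E)).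
  { rewrite <- tens_compE, assoc_invK, comp_idlE, tens_idE. reflexivity. }
  reassoc. rewrite pentagon_inv_mixed. reassoc.
  rw <- tens_compE. rewrite assocK, comp_idlE, tens_idE, comp_idrE.
  rw <- tens_compE. rw assoc_invK. rewrite comp_idlE, tens_idE, comp_idlE.
  cancel_isos. reflexivity.
Qed.

(* Kelly's lemmas, obtained from the pentagon and the triangle by cancelling a
   whiskering with the unit. *)
Lemma assoc_ru A B : assoc A B unitob ;; ru (A ⊗ B) = idm A ⊠ ru B.
Proof.
  apply ru_whisker_inj.
  apply (precomp_inj (assoc A (B ⊗ unitob) unitob) _ (assoc_invK _ _ _)).
  apply (precomp_inj (idm A ⊠ assoc B unitob unitob) (idm A ⊠ assoc_inv B unitob unitob)).
  { rewrite <- tens_compE, assoc_invK, comp_idlE, tens_idE. reflexivity. }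
  pose proof (f_equal (fun h => h ;; (ru (A ⊗ B) ⊠ idm unitob))
                (pentagonE A B unitob unitob)) as P.
  simpl in P. reassoc_in P. rw triangleE in P.
  rewrite <- (tens_idE A B), <- assoc_natE, <- triangleE, <- (comp_idlE (idm A)),
    tens_compE, comp_assocE, assoc_natE, <- tens_compE, !comp_idlE in P.
  symmetry. exact P.
Qed.
Lemma assoc_lu A B : assoc unitob A B ;; (lu A ⊠ idm B) = lu (A ⊗ B).
Proof.
  apply lu_whisker_inj. apply (postcomp_inj (assoc _ _ _) (assoc_inv _ _ _) (assocK _ _ _)).
  pose proof (f_equal (fun h => h ;; ((ru unitob ⊠ idm A) ⊠ idm B))
                (pentagonE unitob unitob A B)) as P.
  simpl in P. reassoc_in P.
  rewrite <- assoc_natE, tens_idE, <- tens_compE, comp_idlE in P.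
  rw triangleE in P. rw triangleE in P. rewrite <- assoc_natE in P.
  rw <- tens_compE in P. rewrite comp_idlE in P. rewrite P. reflexivity.
Qed.
Lemma assoc_inv_lu A B : assoc_inv unitob A B ;; lu (A ⊗ B) = lu A ⊠ idm B.
Proof. rewrite <- assoc_lu. cancel_isos. reflexivity. Qed.
Lemma lu_unitE : lu (@unitob C) = ru unitob.
Proof.
  apply ru_whisker_inj. apply (precomp_inj (assoc unitob unitob unitob) _ (assoc_invK _ _ _)).
  rewrite assoc_lu, triangleE.
  apply (postcomp_inj (lu unitob) (lu_inv _) (luK _)). rewrite lu_natE. reflexivity.
Qed.
Lemma sym_ru A : sym unitob A ;; ru A = lu A.
Proof.
  apply lu_whisker_inj. apply (postcomp_inj (sym unitob A) (sym A unitob) (symK _ _)).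
  pose proof (f_equal (fun h => h ;; ru (A ⊗ unitob)) (hexagonE unitob unitob A)) as P.
  simpl in P. reassoc_in P.
  rw assoc_ru in P. rw <- sym_natE in P. rw triangleE in P. rewrite ru_natE in P.
  rw assoc_ru in P. rw <- tens_compE in P. rewrite comp_idlE in P. rewrite P. reflexivity.
Qed.
Lemma sym_lu A : sym A unitob ;; lu A = ru A.
Proof. rewrite <- sym_ru. rw symK. apply comp_idlE. Qed.

Lemma sym_tens_l A B D :
  sym (A ⊗ B) D = assoc_inv A B D ;; ((idm A ⊠ sym B D) ;;
    (assoc A D B ;; ((sym A D ⊠ idm B) ;; assoc_inv D A B))).
Proof.
  apply (precomp_inj (assoc A B D) (assoc_inv A B D) (assoc_invK _ _ _)).
  apply (postcomp_inj (assoc D A B) (assoc_inv D A B) (assocK _ _ _)).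
  cancel_isos. apply hexagonE.
Qed.
Lemma sym_tens_r A B D :
  sym A (B ⊗ D) = assoc A B D ;; ((sym A B ⊠ idm D) ;;
    (assoc_inv B A D ;; ((idm B ⊠ sym A D) ;; assoc B D A))).
Proof.
  transitivity (sym A (B ⊗ D) ;; (sym (B ⊗ D) A ;; (assoc A B D ;; ((sym A B ⊠ idm D) ;;
    (assoc_inv B A D ;; ((idm B ⊠ sym A D) ;; assoc B D A)))))).
  - rewrite sym_tens_l. cancel_isos.
    rw <- tens_compE. rw symK. rewrite comp_idlE, tens_idE. cancel_isos.
    rw <- tens_compE. rw symK. rewrite comp_idlE, tens_idE. cancel_isos. reflexivity.
  - rw symK. rewrite comp_idlE. reflexivity.
Qed.
End MonoidalBasics.

(** * Coherence *)

Section SwapHead.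
Context {C : ASMC}.
Implicit Types A B X Y : ob C.

Definition swap_head A B X : hom (A ⊗ (B ⊗ X)) (B ⊗ (A ⊗ X)) :=
  assoc A B X ;; ((sym A B ⊠ idm X) ;; assoc_inv B A X).

Lemma swap_head_natE {A A' B B' X X'} (f : hom A A') (g : hom B B') (h : hom X X') :
  (f ⊠ (g ⊠ h)) ;; swap_head A' B' X' = swap_head A B X ;; (g ⊠ (f ⊠ h)).
Proof.
  unfold swap_head. rw assoc_natE. rw <- tens_compE. rewrite sym_natE, comp_idrE.
  rewrite <- (comp_idlE h) at 1. rewrite tens_compE. reassoc. rw assoc_inv_natE. reflexivity.
Qed.
Lemma swap_head_tail_natE A B {X Y} (g : hom X Y) :
  (idm A ⊠ (idm B ⊠ g)) ;; swap_head A B Y = swap_head A B X ;; (idm B ⊠ (idm A ⊠ g)).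
Proof. apply swap_head_natE. Qed.
Lemma swap_headK A B X : swap_head A B X ;; swap_head B A X = idm _.
Proof.
  unfold swap_head. cancel_isos.
  rw <- tens_compE. rw symK. rewrite comp_idlE, tens_idE. cancel_isos. reflexivity.
Qed.

Lemma swap_head_assoc_inv A B X Y :
  (swap_head A B X ⊠ idm Y) ;; (assoc_inv B (A ⊗ X) Y ;; (idm B ⊠ assoc_inv A X Y))
  = assoc_inv A (B ⊗ X) Y ;; ((idm A ⊠ assoc_inv B X Y) ;; swap_head A B (X ⊗ Y)).
Proof.
  unfold swap_head. rw pentagon_inv_mixed. rw pentagon_inv_mixed. rw assoc_invK.
  rewrite comp_idlE, <- (tens_idE X Y). rw <- assoc_inv_natE.
  rw <- tens_compE. rw assoc_invK. rewrite comp_idrE, comp_idlE.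
  rw <- tens_compE. rewrite comp_idlE. reflexivity.
Qed.
Lemma sym_tens_swap_head A B X Y :
  assoc A (B ⊗ X) Y ;; ((sym A (B ⊗ X) ⊠ idm Y) ;;
    (assoc_inv (B ⊗ X) A Y ;; assoc_inv B X (A ⊗ Y)))
  = (idm A ⊠ assoc_inv B X Y) ;; (swap_head A B (X ⊗ Y) ;;
    (idm B ⊠ (assoc A X Y ;; ((sym A X ⊠ idm Y) ;; assoc_inv X A Y)))).
Proof.
  rewrite sym_tens_r, !whiskerr_comp. reassoc.
  rw <- pentagon_inv_mixed. rw assoc_inv_natE. rw pentagon_mixed. rw <- assoc_natE.
  rw pentagon_assoc_conj. unfold swap_head. rewrite !whiskerl_comp. reassoc.
  rewrite tens_idE. reflexivity.
Qed.
End SwapHead.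

Section TensorLists.
Context {C : ASMC}.
Local Notation O := (ob C).
Implicit Types (A B : O) (l r : list O).

Fixpoint tens_list l : O :=
  match l with nil => unitob | A :: l => A ⊗ tens_list l end.

(* Transparent versions of [app_assoc] and [app_nil_r]: [cast_hom] must compute
   on them (see [cast_hom_cons]). *)
Fixpoint app_assoc_t l1 l2 l3 : l1 ++ (l2 ++ l3) = (l1 ++ l2) ++ l3 :=
  match l1 with nil => eq_refl | A :: l => f_equal (cons A) (app_assoc_t l l2 l3) end.
Fixpoint app_nil_r_t l : l ++ nil = l :=
  match l with nil => eq_refl | A :: l => f_equal (cons A) (app_nil_r_t l) end.

Definition cast_hom {l l'} (e : l = l') : hom (tens_list l) (tens_list l') :=
  match e in _ = y return hom (tens_list l) (tens_list y) with eq_refl => idm _ end.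

Lemma cast_hom_cons A {l l'} (e : l = l') :
  cast_hom (f_equal (cons A) e) = idm A ⊠ cast_hom e.
Proof. destruct e. simpl. rewrite tens_idE. reflexivity. Qed.
Lemma cast_homK {l l'} (e : l = l') : cast_hom e ;; cast_hom (eq_sym e) = idm _.
Proof. destruct e. apply comp_idlE. Qed.

Fixpoint tens_list_app l1 l2 : hom (tens_list l1 ⊗ tens_list l2) (tens_list (l1 ++ l2)) :=
  match l1 with
  | nil => lu (tens_list l2)
  | A :: l1 => assoc_inv A (tens_list l1) (tens_list l2) ;; (idm A ⊠ tens_list_app l1 l2)
  end.
Fixpoint tens_list_unapp l1 l2 : hom (tens_list (l1 ++ l2)) (tens_list l1 ⊗ tens_list l2) :=
  match l1 with
  | nil => lu_inv (tens_list l2)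
  | A :: l1 => (idm A ⊠ tens_list_unapp l1 l2) ;; assoc A (tens_list l1) (tens_list l2)
  end.

Lemma tens_list_appK l1 l2 : tens_list_app l1 l2 ;; tens_list_unapp l1 l2 = idm _.
Proof.
  induction l1 as [|A l1 IH]; simpl; [apply luK|].
  reassoc. rw <- tens_compE. rewrite IH, comp_idlE, tens_idE. cancel_isos. reflexivity.
Qed.

Lemma tens_list_app_assoc l1 l2 l3 :
  assoc (tens_list l1) (tens_list l2) (tens_list l3) ;;
    ((tens_list_app l1 l2 ⊠ idm _) ;; tens_list_app (l1 ++ l2) l3)
  = (idm _ ⊠ tens_list_app l2 l3) ;;
    (tens_list_app l1 (l2 ++ l3) ;; cast_hom (app_assoc_t l1 l2 l3)).
Proof.
  induction l1 as [|A l1 IH]; simpl.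
  - rewrite comp_idrE. rw assoc_lu. rewrite lu_natE. reflexivity.
  - rewrite cast_hom_cons, whiskerr_comp. reassoc.
    rw assoc_inv_natE. rw pentagon_assoc_conj. rewrite <- (tens_idE A (tens_list l1)).
    rw assoc_inv_natE. repeat rw <- tens_compE. rewrite !comp_idlE, IH. reflexivity.
Qed.
Lemma tens_list_app_nil l : tens_list_app l nil ;; cast_hom (app_nil_r_t l) = ru (tens_list l).
Proof.
  induction l as [|A l IH]; simpl in *.
  - rewrite comp_idrE. apply lu_unitE.
  - rewrite cast_hom_cons. reassoc. rw <- tens_compE. rewrite comp_idlE, IH, <- assoc_ru.
    cancel_isos. reflexivity.
Qed.

Inductive word : list O -> list O -> Type :=
| Wid l : word l l
| Wcomp {l1 l2 l3} : word l1 l2 -> word l2 l3 -> word l1 l3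
| Wswap A B r : word (A :: B :: r) (B :: A :: r)
| Wcons A {l l'} : word l l' -> word (A :: l) (A :: l')
| Wcast {l l'} : l = l' -> word l l'.

Fixpoint eval_word {l l'} (w : word l l') : hom (tens_list l) (tens_list l') :=
  match w with
  | Wid _ => idm _
  | Wcomp w1 w2 => eval_word w1 ;; eval_word w2
  | Wswap A B r => swap_head A B (tens_list r)
  | Wcons A w => idm A ⊠ eval_word w
  | Wcast e => cast_hom e
  end.

Fixpoint word_app_r {l l'} (w : word l l') l2 : word (l ++ l2) (l' ++ l2) :=
  match w with
  | Wid _ => Wid _
  | Wcomp w1 w2 => Wcomp (word_app_r w1 l2) (word_app_r w2 l2)
  | Wswap A B r => Wswap A B (r ++ l2)
  | Wcons A w => Wcons A (word_app_r w l2)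
  | Wcast e => Wcast (f_equal (fun x => x ++ l2) e)
  end.
Fixpoint word_app_l l1 {l l'} (w : word l l') : word (l1 ++ l) (l1 ++ l') :=
  match l1 with nil => w | A :: l1 => Wcons A (word_app_l l1 w) end.

Lemma eval_word_app_r {l l'} (w : word l l') l2 :
  (eval_word w ⊠ idm (tens_list l2)) ;; tens_list_app l' l2
  = tens_list_app l l2 ;; eval_word (word_app_r w l2).
Proof.
  induction w as [l|l1 l2' l3 w1 IH1 w2 IH2|A B r|A l l' w IH|l l' e]; simpl.
  - rewrite tens_idE, comp_idlE, comp_idrE. reflexivity.
  - rewrite <- (comp_idlE (idm (tens_list l2))), tens_compE. reassoc.
    rewrite IH2. rw IH1. reflexivity.
  - reassoc. rewrite !whiskerl_comp. reassoc.
    rw swap_head_tail_natE. rw swap_head_assoc_inv. reflexivity.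
  - reassoc. rw assoc_inv_natE. rw <- tens_compE. rewrite comp_idlE, IH, whiskerl_comp.
    reflexivity.
  - destruct e. simpl. rewrite tens_idE, comp_idlE, comp_idrE. reflexivity.
Qed.
Lemma eval_word_app_l l1 {l l'} (w : word l l') :
  (idm (tens_list l1) ⊠ eval_word w) ;; tens_list_app l1 l'
  = tens_list_app l1 l ;; eval_word (word_app_l l1 w).
Proof.
  induction l1 as [|A l1 IH]; simpl; [apply lu_natE|].
  rewrite <- (tens_idE A (tens_list l1)). rw assoc_inv_natE. rw <- tens_compE.
  rewrite comp_idlE, IH, whiskerl_comp. reflexivity.
Qed.

Fixpoint word_bubble A l2 r : word (A :: (l2 ++ r)) (l2 ++ A :: r) :=
  match l2 with
  | nil => Wid (A :: r)
  | B :: l2 => Wcomp (Wswap A B (l2 ++ r)) (Wcons B (word_bubble A l2 r))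
  end.
Fixpoint word_sym l1 l2 : word (l1 ++ l2) (l2 ++ l1) :=
  match l1 with
  | nil => Wcast (eq_sym (app_nil_r_t l2))
  | A :: l1 => Wcomp (Wcons A (word_sym l1 l2)) (word_bubble A l2 l1)
  end.

Lemma tens_list_app_bubble A l2 r :
  assoc A (tens_list l2) (tens_list r) ;; ((sym A (tens_list l2) ⊠ idm (tens_list r)) ;;
    (assoc_inv (tens_list l2) A (tens_list r) ;; tens_list_app l2 (A :: r)))
  = (idm A ⊠ tens_list_app l2 r) ;; eval_word (word_bubble A l2 r).
Proof.
  induction l2 as [|B l2 IH]; simpl.
  - rw assoc_inv_lu. rw <- tens_compE. rw sym_lu. rewrite comp_idlE, triangleE, comp_idrE.
    reflexivity.
  - rw sym_tens_swap_head. rw <- tens_compE. rewrite comp_idlE.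
    rewrite (whiskerl_comp (assoc_inv B (tens_list l2) (tens_list r))). reassoc.
    rw swap_head_tail_natE. rw <- tens_compE. rewrite comp_idlE, <- IH. reassoc. reflexivity.
Qed.
Lemma tens_list_app_sym l1 l2 :
  sym (tens_list l1) (tens_list l2) ;; tens_list_app l2 l1
  = tens_list_app l1 l2 ;; eval_word (word_sym l1 l2).
Proof.
  induction l1 as [|A l1 IH]; simpl.
  - rewrite <- (comp_idrE (tens_list_app l2 [])), <- (cast_homK (app_nil_r_t l2)).
    pose proof (tens_list_app_nil l2) as H. simpl in H |- *. rw H. rw sym_ru. reflexivity.
  - rewrite sym_tens_l. reassoc. rw tens_list_app_bubble. rw <- tens_compE.
    rewrite comp_idlE, IH, whiskerl_comp. reassoc. reflexivity.
Qed.
End TensorLists.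

(* Every object expression is flattened to the list of its atoms and every
   structural morphism to a word of transpositions on that list
   ([normalize_natural]), so two structural morphisms agree once their words
   evaluate to the same morphism. *)
Section Coherence.
Context {C : ASMC}.
Local Notation O := (ob C).

Inductive oexpr := Ovar (A : O) | Ounit | Otens (e1 e2 : oexpr).

Fixpoint eval_ob (e : oexpr) : O :=
  match e with Ovar A => A | Ounit => unitob | Otens e1 e2 => eval_ob e1 ⊗ eval_ob e2 end.
Fixpoint flatten_ob (e : oexpr) : list O :=
  match e with Ovar A => [A] | Ounit => [] | Otens e1 e2 => flatten_ob e1 ++ flatten_ob e2 end.

Fixpoint normalize_ob (e : oexpr) : hom (eval_ob e) (tens_list (flatten_ob e)) :=
  match e with
  | Ovar A => ru_inv A
  | Ounit => idm unitob
  | Otens e1 e2 =>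
      (normalize_ob e1 ⊠ normalize_ob e2) ;; tens_list_app (flatten_ob e1) (flatten_ob e2)
  end.
Fixpoint denormalize_ob (e : oexpr) : hom (tens_list (flatten_ob e)) (eval_ob e) :=
  match e with
  | Ovar A => ru A
  | Ounit => idm unitob
  | Otens e1 e2 =>
      tens_list_unapp (flatten_ob e1) (flatten_ob e2) ;; (denormalize_ob e1 ⊠ denormalize_ob e2)
  end.
Lemma normalize_obK e : normalize_ob e ;; denormalize_ob e = idm _.
Proof.
  induction e as [A| |e1 IH1 e2 IH2]; simpl; [apply ru_invK | apply comp_idlE |].
  reassoc. rw tens_list_appK.
  rewrite comp_idlE, <- tens_compE, IH1, IH2, tens_idE. reflexivity.
Qed.

Inductive mexpr : oexpr -> oexpr -> Type :=
| Mid e : mexpr e e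
| Mcomp {e1 e2 e3} : mexpr e1 e2 -> mexpr e2 e3 -> mexpr e1 e3
| Mtens {e1 e2 e3 e4} : mexpr e1 e2 -> mexpr e3 e4 -> mexpr (Otens e1 e3) (Otens e2 e4)
| Massoc e1 e2 e3 : mexpr (Otens e1 (Otens e2 e3)) (Otens (Otens e1 e2) e3)
| Massoc_inv e1 e2 e3 : mexpr (Otens (Otens e1 e2) e3) (Otens e1 (Otens e2 e3))
| Mlu e : mexpr (Otens Ounit e) e
| Mlu_inv e : mexpr e (Otens Ounit e)
| Mru e : mexpr (Otens e Ounit) e
| Mru_inv e : mexpr e (Otens e Ounit)
| Msym e1 e2 : mexpr (Otens e1 e2) (Otens e2 e1).

Fixpoint eval_mexpr {e1 e2} (s : mexpr e1 e2) : hom (eval_ob e1) (eval_ob e2) :=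
  match s with
  | Mid e => idm (eval_ob e)
  | Mcomp s t => eval_mexpr s ;; eval_mexpr t
  | Mtens s t => eval_mexpr s ⊠ eval_mexpr t
  | Massoc e1 e2 e3 => assoc (eval_ob e1) (eval_ob e2) (eval_ob e3)
  | Massoc_inv e1 e2 e3 => assoc_inv (eval_ob e1) (eval_ob e2) (eval_ob e3)
  | Mlu e => lu (eval_ob e)
  | Mlu_inv e => lu_inv (eval_ob e)
  | Mru e => ru (eval_ob e)
  | Mru_inv e => ru_inv (eval_ob e)
  | Msym e1 e2 => sym (eval_ob e1) (eval_ob e2)
  end.

Fixpoint word_of_mexpr {e1 e2} (s : mexpr e1 e2) : word (flatten_ob e1) (flatten_ob e2) :=
  match s with
  | Mid _ => Wid _
  | Mcomp s t => Wcomp (word_of_mexpr s) (word_of_mexpr t)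
  | @Mtens _ e2 e3 _ s t =>
      Wcomp (word_app_r (word_of_mexpr s) (flatten_ob e3))
            (word_app_l (flatten_ob e2) (word_of_mexpr t))
  | Massoc e1 e2 e3 => Wcast (app_assoc_t (flatten_ob e1) (flatten_ob e2) (flatten_ob e3))
  | Massoc_inv e1 e2 e3 =>
      Wcast (eq_sym (app_assoc_t (flatten_ob e1) (flatten_ob e2) (flatten_ob e3)))
  | Mlu _ | Mlu_inv _ => Wid _
  | Mru e => Wcast (app_nil_r_t (flatten_ob e))
  | Mru_inv e => Wcast (eq_sym (app_nil_r_t (flatten_ob e)))
  | Msym e1 e2 => word_sym (flatten_ob e1) (flatten_ob e2)
  end.

Lemma normalize_natural {e1 e2} (s : mexpr e1 e2) :
  eval_mexpr s ;; normalize_ob e2 = normalize_ob e1 ;; eval_word (word_of_mexpr s).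
Proof.
  induction s as [e|e1 e2 e3 s IHs t IHt|e1 e2 e3 e4 s IHs t IHt|e1 e2 e3|e1 e2 e3
                 |e|e|e|e|e1 e2]; simpl.
  - rewrite comp_idlE, comp_idrE. reflexivity.
  - reassoc. rewrite IHt. rw IHs. reflexivity.
  - rw <- tens_compE. rewrite IHs, IHt, tens_compE. reassoc.
    rewrite (tens_split_l (eval_word (word_of_mexpr s))). reassoc.
    rw eval_word_app_l. rw eval_word_app_r. reflexivity.
  - rewrite tens_comp_l, tens_comp_r. reassoc. rw <- assoc_natE.
    rw tens_list_app_assoc. reflexivity.
  - apply (precomp_inj (assoc _ _ _) _ (assoc_invK _ _ _)).
    rewrite tens_comp_l, tens_comp_r. cancel_isos. rw <- assoc_natE.
    rw tens_list_app_assoc. rw cast_homK. rewrite comp_idrE. reflexivity.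
  - rewrite lu_natE, comp_idrE. reflexivity.
  - rewrite comp_idrE. rw <- lu_inv_natE. cancel_isos. reflexivity.
  - pose proof (tens_list_app_nil (flatten_ob e)) as H. simpl in H |- *.
    reassoc. rw H. rewrite ru_natE. reflexivity.
  - pose proof (tens_list_app_nil (flatten_ob e)) as H. simpl in H |- *.
    rw <- ru_inv_natE.
    rewrite <- (comp_idrE (tens_list_app (flatten_ob e) [])),
      <- (cast_homK (app_nil_r_t (flatten_ob e))).
    rw H. cancel_isos. reflexivity.
  - rw <- sym_natE. rw tens_list_app_sym. reflexivity.
Qed.

Lemma eval_mexpr_coherent {e1 e2} (s t : mexpr e1 e2) :
  eval_word (word_of_mexpr s) = eval_word (word_of_mexpr t) -> eval_mexpr s = eval_mexpr t.
Proof.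
  intro E. rewrite <- (comp_idrE (eval_mexpr s)), <- (comp_idrE (eval_mexpr t)),
    <- (normalize_obK e2), <- !comp_assocE, !normalize_natural, E.
  reflexivity.
Qed.
End Coherence.

Ltac reify_ob C x :=
  lazymatch x with
  | ?a ⊗ ?b => let ea := reify_ob C a in let eb := reify_ob C b in constr:(@Otens C ea eb)
  | unitob => constr:(@Ounit C)
  | _ => constr:(@Ovar C x)
  end.
Ltac reify_hom C f :=
  lazymatch f with
  | ?g ;; ?h => let eg := reify_hom C g in let eh := reify_hom C h in constr:(Mcomp eg eh)
  | ?g ⊠ ?h => let eg := reify_hom C g in let eh := reify_hom C h in constr:(Mtens eg eh)
  | assoc ?a ?b ?c => let ea := reify_ob C a in let eb := reify_ob C b in
                      let ec := reify_ob C c in constr:(Massoc ea eb ec)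
  | assoc_inv ?a ?b ?c => let ea := reify_ob C a in let eb := reify_ob C b in
                          let ec := reify_ob C c in constr:(Massoc_inv ea eb ec)
  | lu ?a => let ea := reify_ob C a in constr:(Mlu ea)
  | lu_inv ?a => let ea := reify_ob C a in constr:(Mlu_inv ea)
  | ru ?a => let ea := reify_ob C a in constr:(Mru ea)
  | ru_inv ?a => let ea := reify_ob C a in constr:(Mru_inv ea)
  | sym ?a ?b => let ea := reify_ob C a in let eb := reify_ob C b in constr:(Msym ea eb)
  | idm ?a => let ea := reify_ob C a in constr:(Mid ea)
  end.

(* Reduces an equation between structural morphisms to one between the
   interpreted transposition words of both sides; [simpl_words] then cleans
   these up, and what remains is closed by hand with [swap_head] identities. *)
Ltac coherence := unfold tau;
  lazymatch goal with |- @eq (@hom (asmc_data ?C) _ _) ?l ?r =>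
    let sl := reify_hom C l in let sr := reify_hom C r in
    change (eval_mexpr sl = eval_mexpr sr); apply eval_mexpr_coherent; simpl
  end.
Ltac simpl_words :=
  repeat first
    [rewrite tens_idE | rewrite comp_idlE | rewrite comp_idrE | rewrite whiskerl_comp];
  reassoc.

Section Interchange.
Context {C : ASMC}.
Local Notation K := (@unitob C).
Implicit Types A B D E P Q R S X Y Z : ob C.

Lemma tau_swap_head A B D E :
  tau A B D E = assoc_inv A B (D ⊗ E) ;; ((idm A ⊠ swap_head B D E) ;; assoc A D (B ⊗ E)).
Proof. unfold tau, swap_head. rewrite !whiskerl_comp. reassoc. reflexivity. Qed.

Lemma tau_natE {A A' B B' D D' E E'} (fa : hom A A') (fb : hom B B') (fd : hom D D')
    (fe : hom E E') :
  ((fa ⊠ fb) ⊠ (fd ⊠ fe)) ;; tau A' B' D' E' = tau A B D E ;; ((fa ⊠ fd) ⊠ (fb ⊠ fe)).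
Proof.
  rewrite !tau_swap_head. rw assoc_inv_natE. rw <- tens_compE.
  rewrite comp_idrE, swap_head_natE, <- (comp_idlE fa) at 1.
  rewrite tens_compE. reassoc. rw assoc_natE. reflexivity.
Qed.

Lemma tau_sym P Q X Y :
  tau P Q X Y ;; sym (P ⊗ X) (Q ⊗ Y) = (sym P Q ⊠ sym X Y) ;; tau Q P Y X.
Proof.
  coherence. simpl_words. rw (whiskerl_idm _ (swap_headK _ _ _)). rewrite comp_idlE.
  rw swap_head_tail_natE. reflexivity.
Qed.
Lemma tau_assoc_inner P Q R X Y Z :
  (assoc P Q R ⊠ assoc X Y Z) ;; (tau (P ⊗ Q) R (X ⊗ Y) Z ;; (tau P Q X Y ⊠ idm (R ⊗ Z)))
  = tau P (Q ⊗ R) X (Y ⊗ Z) ;;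
    ((idm (P ⊗ X) ⊠ tau Q R Y Z) ;; assoc (P ⊗ X) (Q ⊗ Y) (R ⊗ Z)).
Proof.
  coherence. simpl_words. rw (whiskerl_eq _ (swap_head_tail_natE _ _ _)). reflexivity.
Qed.
Lemma tau_assoc_outer P Q R S X Y :
  assoc (P ⊗ Q) (R ⊗ S) (X ⊗ Y) ;;
    ((tau P Q R S ⊠ idm (X ⊗ Y)) ;; tau (P ⊗ R) (Q ⊗ S) X Y)
  = (idm (P ⊗ Q) ⊠ tau R S X Y) ;;
    (tau P Q (R ⊗ X) (S ⊗ Y) ;; (assoc P R X ⊠ assoc Q S Y)).
Proof.
  coherence. simpl_words. rw (whiskerl_eq _ (swap_head_tail_natE _ _ _)). reflexivity.
Qed.
Lemma tau_lunit B X :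
  tau K B K X ;; ((ru K ⊠ idm (B ⊗ X)) ;; lu (B ⊗ X)) = lu B ⊠ lu X.
Proof. coherence. simpl_words. reflexivity. Qed.
Lemma tau_runit B X :
  tau B K X K ;; ((idm (B ⊗ X) ⊠ ru K) ;; ru (B ⊗ X)) = ru B ⊠ ru X.
Proof. coherence. simpl_words. reflexivity. Qed.
Lemma tau_lu_inv X Y :
  lu_inv (X ⊗ Y) ;; ((lu_inv K ⊠ idm (X ⊗ Y)) ;; tau K K X Y) = lu_inv X ⊠ lu_inv Y.
Proof. coherence. simpl_words. reflexivity. Qed.
End Interchange.

(** * Monoidal coalgebra modalities *)

Section ModalityAxioms.
Context {C : ASMC} (M : MCM C).
Local Notation mx := (mcm_ax M).
Local Notation K := (@unitob C).
Local Notation B := (bo M).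
Implicit Types X Y Z : ob C.

Lemma bm_idE X : bm M (idm X) = idm _.
Proof. exact (bm_id _ _ mx X). Qed.
Lemma bm_compE {X Y Z} (f : hom X Y) (g : hom Y Z) : bm M (f ;; g) = bm M f ;; bm M g.
Proof. exact (bm_comp _ _ mx _ _ _ f g). Qed.
Lemma dlt_natE {X Y} (f : hom X Y) : dlt M X ;; bm M (bm M f) = bm M f ;; dlt M Y.
Proof. exact (dlt_nat _ _ mx _ _ f). Qed.
Lemma eps_natE {X Y} (f : hom X Y) : eps M X ;; f = bm M f ;; eps M Y.
Proof. exact (eps_nat _ _ mx _ _ f). Qed.
Lemma comonad_counit1E X : dlt M X ;; eps M (B X) = idm _.
Proof. exact (comonad_counit1 _ _ mx X). Qed.
Lemma comonad_counit2E X : dlt M X ;; bm M (eps M X) = idm _.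
Proof. exact (comonad_counit2 _ _ mx X). Qed.
Lemma comonad_coassocE X : dlt M X ;; dlt M (B X) = dlt M X ;; bm M (dlt M X).
Proof. exact (comonad_coassoc _ _ mx X). Qed.
Lemma mm_natE {X X' Y Y'} (f : hom X X') (g : hom Y Y') :
  (bm M f ⊠ bm M g) ;; mm M X' Y' = mm M X Y ;; bm M (f ⊠ g).
Proof. exact (mm_nat _ _ mx _ _ _ _ f g). Qed.
Lemma mm_assocE X Y Z :
  (idm (B X) ⊠ mm M Y Z) ;; (mm M X (Y ⊗ Z) ;; bm M (assoc X Y Z))
  = assoc (B X) (B Y) (B Z) ;; ((mm M X Y ⊠ idm (B Z)) ;; mm M (X ⊗ Y) Z).
Proof. rewrite <- !comp_assocE. exact (mm_assoc _ _ mx X Y Z). Qed.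
Lemma mm_lunitE X : (mK M ⊠ idm (B X)) ;; (mm M K X ;; bm M (lu X)) = lu (B X).
Proof. rewrite <- comp_assocE. exact (mm_lunit _ _ mx X). Qed.
Lemma mm_runitE X : (idm (B X) ⊠ mK M) ;; (mm M X K ;; bm M (ru X)) = ru (B X).
Proof. rewrite <- comp_assocE. exact (mm_runit _ _ mx X). Qed.
Lemma mm_symE X Y : sym (B X) (B Y) ;; mm M Y X = mm M X Y ;; bm M (sym X Y).
Proof. exact (mm_sym _ _ mx X Y). Qed.
Lemma dlt_monE X Y :
  mm M X Y ;; dlt M (X ⊗ Y) = (dlt M X ⊠ dlt M Y) ;; (mm M (B X) (B Y) ;; bm M (mm M X Y)).
Proof. rewrite (dlt_mon _ _ mx). apply comp_assocE. Qed.
Lemma dlt_monKE : mK M ;; dlt M K = mK M ;; bm M (mK M).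
Proof. exact (dlt_monK _ _ mx). Qed.
Lemma eps_monE X Y : mm M X Y ;; eps M (X ⊗ Y) = eps M X ⊠ eps M Y.
Proof. exact (eps_mon _ _ mx X Y). Qed.
Lemma eps_monKE : mK M ;; eps M K = idm K.
Proof. exact (eps_monK _ _ mx). Qed.
Lemma Dl_natE {X Y} (f : hom X Y) : bm M f ;; Dl M Y = Dl M X ;; (bm M f ⊠ bm M f).
Proof. exact (Dl_nat _ _ mx _ _ f). Qed.
Lemma ee_natE {X Y} (f : hom X Y) : bm M f ;; ee M Y = ee M X.
Proof. exact (ee_nat _ _ mx _ _ f). Qed.
Lemma comonoid_coassocE X :
  Dl M X ;; ((idm (B X) ⊠ Dl M X) ;; assoc _ _ _) = Dl M X ;; (Dl M X ⊠ idm (B X)).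
Proof. rewrite <- comp_assocE. exact (comonoid_coassoc _ _ mx X). Qed.
Lemma comonoid_lcounitE X : Dl M X ;; ((ee M X ⊠ idm (B X)) ;; lu (B X)) = idm _.
Proof. rewrite <- comp_assocE. exact (comonoid_lcounit _ _ mx X). Qed.
Lemma comonoid_rcounitE X : Dl M X ;; ((idm (B X) ⊠ ee M X) ;; ru (B X)) = idm _.
Proof. rewrite <- comp_assocE. exact (comonoid_rcounit _ _ mx X). Qed.
Lemma comonoid_cocommE X : Dl M X ;; sym (B X) (B X) = Dl M X.
Proof. exact (comonoid_cocomm _ _ mx X). Qed.
Lemma dlt_DlE X : dlt M X ;; Dl M (B X) = Dl M X ;; (dlt M X ⊠ dlt M X).
Proof. exact (dlt_Dl _ _ mx X). Qed.
Lemma dlt_eeE X : dlt M X ;; ee M (B X) = ee M X.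
Proof. exact (dlt_ee _ _ mx X). Qed.
Lemma Dl_monE X Y :
  mm M X Y ;; Dl M (X ⊗ Y) = (Dl M X ⊠ Dl M Y) ;; (tau _ _ _ _ ;; (mm M X Y ⊠ mm M X Y)).
Proof. rewrite (Dl_mon _ _ mx). apply comp_assocE. Qed.
Lemma Dl_monKE : mK M ;; Dl M K = lu_inv K ;; (mK M ⊠ mK M).
Proof. exact (Dl_monK _ _ mx). Qed.
Lemma ee_monE X Y : mm M X Y ;; ee M (X ⊗ Y) = (ee M X ⊠ ee M Y) ;; lu K.
Proof. exact (ee_mon _ _ mx X Y). Qed.
Lemma ee_monKE : mK M ;; ee M K = idm K.
Proof. exact (ee_monK _ _ mx). Qed.
Lemma Dl_coalgE X :
  Dl M X ;; ((dlt M X ⊠ dlt M X) ;; mm M (B X) (B X)) = dlt M X ;; bm M (Dl M X).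
Proof. rewrite <- comp_assocE. exact (Dl_coalg _ _ mx X). Qed.
Lemma ee_coalgE X : ee M X ;; mK M = dlt M X ;; bm M (ee M X).
Proof. exact (ee_coalg _ _ mx X). Qed.

Lemma mm_nat_l {X X' Y} (f : hom X X') :
  (bm M f ⊠ idm (B Y)) ;; mm M X' Y = mm M X Y ;; bm M (f ⊠ idm Y).
Proof. rewrite <- bm_idE, mm_natE. reflexivity. Qed.
Lemma mm_nat_r {X Y Y'} (g : hom Y Y') :
  (idm (B X) ⊠ bm M g) ;; mm M X Y' = mm M X Y ;; bm M (idm X ⊠ g).
Proof. rewrite <- bm_idE, mm_natE. reflexivity. Qed.
Lemma mm_lunit_inv X : (mK M ⊠ idm (B X)) ;; mm M K X = lu (B X) ;; bm M (lu_inv X).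
Proof.
  apply (postcomp_inj (bm M (lu X)) (bm M (lu_inv X))).
  { rewrite <- bm_compE, luK, bm_idE. reflexivity. }
  reassoc. rewrite mm_lunitE, <- bm_compE, lu_invK, bm_idE, comp_idrE. reflexivity.
Qed.
Lemma mm_assoc_inv X Y Z :
  (mm M X Y ⊠ idm (B Z)) ;; (mm M (X ⊗ Y) Z ;; bm M (assoc_inv X Y Z))
  = assoc_inv (B X) (B Y) (B Z) ;; ((idm (B X) ⊠ mm M Y Z) ;; mm M X (Y ⊗ Z)).
Proof.
  apply (precomp_inj (assoc (B X) (B Y) (B Z)) _ (assoc_invK _ _ _)). cancel_isos.
  rw <- mm_assocE. rewrite <- bm_compE, assocK, bm_idE, comp_idrE. reflexivity.
Qed.
Lemma mm_tau P Q R S :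
  tau (B P) (B Q) (B R) (B S) ;; ((mm M P R ⊠ mm M Q S) ;; mm M (P ⊗ R) (Q ⊗ S))
  = (mm M P Q ⊠ mm M R S) ;; (mm M (P ⊗ Q) (R ⊗ S) ;; bm M (tau P Q R S)).
Proof.
  unfold tau. rewrite !bm_compE. reassoc. rewrite (tens_split_r (mm M P Q)). reassoc.
  rw mm_assoc_inv. rewrite <- (tens_idE (B P) (B Q)). rw assoc_inv_natE.
  rw <- mm_nat_r. rw <- mm_nat_r. rw <- mm_nat_r.
  repeat (rw <- (tens_compE (idm (B P))); rewrite comp_idlE). reassoc.
  rw mm_assocE. rw <- mm_nat_l. rw <- (tens_compE (mm M Q R)).
  rewrite comp_idlE, <- mm_symE, whiskerr_comp. reassoc. rw mm_assoc_inv.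
  rewrite !whiskerl_comp. reassoc. rw mm_assocE. rw assoc_natE. rewrite tens_idE.
  rw <- (tens_compE (idm (B P ⊗ B R))). rewrite comp_idlE, comp_idrE. reflexivity.
Qed.
End ModalityAxioms.

(** * The bimonoid !A *)

Section Bimonoid.
Context {C : ASMC} (M : MCM C) (A : ob C).
Local Notation K := (@unitob C).
Local Notation B := (bo M A).
Local Notation m := (mm M).
Local Notation dA := (dlt M A).
Local Notation epsA := (eps M A).
Local Notation eA := (ee M A).
Local Notation DA := (Dl M A).
Local Notation nabla := (nablaA M A).
Local Notation u := (uA M A).

Definition sum_counits : hom (B ⊗ B) A :=
  ((epsA ⊠ eA) ;; ru A) ⊕ ((eA ⊠ epsA) ;; lu A).

Lemma nablaA_unfold : nabla = (dA ⊠ dA) ;; (m B B ;; bm M sum_counits).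
Proof. unfold nablaA. apply comp_assocE. Qed.

Lemma nablaA_eps : nabla ;; epsA = sum_counits.
Proof.
  rewrite nablaA_unfold. reassoc. rw <- eps_natE. rw eps_monE. rw <- tens_compE.
  rewrite !comonad_counit1E, tens_idE, comp_idlE. reflexivity.
Qed.
Lemma nablaA_ee : nabla ;; eA = (eA ⊠ eA) ;; lu K.
Proof.
  rewrite nablaA_unfold. reassoc. rw ee_natE. rw ee_monE. rw <- tens_compE.
  rewrite !dlt_eeE. reflexivity.
Qed.
Lemma nablaA_dlt : nabla ;; dA = (dA ⊠ dA) ;; (m B B ;; bm M nabla).
Proof.
  rewrite nablaA_unfold. reassoc. rw <- dlt_natE. rw dlt_monE. rw <- tens_compE.
  rewrite !comonad_coassocE, tens_compE. reassoc. rw mm_natE. rewrite !bm_compE. reassoc.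
  reflexivity.
Qed.
Lemma nablaA_Dl : nabla ;; DA = (DA ⊠ DA) ;; (tau B B B B ;; (nabla ⊠ nabla)).
Proof.
  rewrite !nablaA_unfold. reassoc. rw Dl_natE. rw Dl_monE. rw <- (tens_compE dA _ dA _).
  rewrite !dlt_DlE, tens_compE. reassoc. rw tau_natE. rewrite <- !tens_compE. reassoc.
  reflexivity.
Qed.

Lemma uA_ee : u ;; eA = idm K.
Proof. unfold uA. reassoc. rw ee_natE. apply ee_monKE. Qed.
Lemma uA_Dl : u ;; DA = lu_inv K ;; (u ⊠ u).
Proof. unfold uA. reassoc. rw Dl_natE. rw Dl_monKE. rw <- tens_compE. reflexivity. Qed.
Lemma uA_dlt : u ;; dA = mK M ;; bm M u.
Proof. unfold uA. reassoc. rw <- dlt_natE. rw dlt_monKE. rewrite bm_compE. reflexivity. Qed.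
Lemma uA_eps : u ;; epsA = zero K A.
Proof. unfold uA. reassoc. rw <- eps_natE. rw eps_monKE. rewrite comp_idlE. reflexivity. Qed.

Lemma sum_counits_unit_l : (u ⊠ idm B) ;; sum_counits = lu B ;; epsA.
Proof.
  unfold sum_counits. rewrite compDr. reassoc. rw <- tens_compE. rw <- tens_compE.
  rewrite uA_eps, uA_ee, !comp_idlE, tens0l, comp0l, plus0l, lu_natE. reflexivity.
Qed.
Lemma sum_counits_unit_r : (idm B ⊠ u) ;; sum_counits = ru B ;; epsA.
Proof.
  unfold sum_counits. rewrite compDr. reassoc. rw <- tens_compE. rw <- tens_compE.
  rewrite uA_eps, uA_ee, !comp_idlE, tens0r, comp0l, plus0r, ru_natE. reflexivity.
Qed.

Lemma nablaA_unit_l : (u ⊠ idm B) ;; nabla = lu B.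
Proof.
  rewrite nablaA_unfold. rw <- tens_compE. rewrite uA_dlt, comp_idlE, tens_comp_l. reassoc.
  rw mm_nat_l. rw <- bm_compE. rewrite sum_counits_unit_l, bm_compE, tens_split_r. reassoc.
  rw mm_lunitE. rw lu_natE. rw comonad_counit2E. apply comp_idrE.
Qed.
Lemma nablaA_unit_r : (idm B ⊠ u) ;; nabla = ru B.
Proof.
  rewrite nablaA_unfold. rw <- tens_compE. rewrite uA_dlt, comp_idlE, tens_comp_r. reassoc.
  rw mm_nat_r. rw <- bm_compE. rewrite sum_counits_unit_r, bm_compE, tens_split_l. reassoc.
  rw mm_runitE. rw ru_natE. rw comonad_counit2E. apply comp_idrE.
Qed.

(* Each side is a sum of three terms, one for each position of ε among ε, e, e;
   this is where the additive structure is used. *)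
Lemma sum_counits_assoc :
  (idm B ⊠ nabla) ;; sum_counits = assoc B B B ;; ((nabla ⊠ idm B) ;; sum_counits).
Proof.
  assert (coh_rr : (idm A ⊠ lu K) ;; ru A = assoc A K K ;; ((ru A ⊠ idm K) ;; ru A))
    by (coherence; simpl_words; reflexivity).
  assert (coh_lr : (idm K ⊠ ru A) ;; lu A = assoc K A K ;; ((lu A ⊠ idm K) ;; ru A))
    by (coherence; simpl_words; reflexivity).
  assert (coh_ll : (idm K ⊠ lu A) ;; lu A = assoc K K A ;; ((lu K ⊠ idm A) ;; lu A))
    by (coherence; simpl_words; reflexivity).
  unfold sum_counits. rewrite !compDr. reassoc.
  do 4 rw <- tens_compE. rewrite !comp_idlE, nablaA_eps, nablaA_ee.
  unfold sum_counits. rewrite tensDr, tensDl, !compDl, !compDr, plus_assocE. reassoc.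
  f_equal; [|f_equal]; rewrite tens_comp_r, tens_comp_l; reassoc; rw <- assoc_natE.
  - rewrite coh_rr. reflexivity.
  - rewrite coh_lr. reflexivity.
  - rewrite coh_ll. reflexivity.
Qed.
Lemma nablaA_assoc : (idm B ⊠ nabla) ;; nabla = assoc B B B ;; ((nabla ⊠ idm B) ;; nabla).
Proof.
  assert (lift_r : (idm B ⊠ nabla) ;; ((dA ⊠ dA) ;; m B B)
    = (dA ⊠ (dA ⊠ dA)) ;; ((idm _ ⊠ m B B) ;; (m B (B ⊗ B) ;; bm M (idm B ⊠ nabla)))).
  { rw <- tens_compE. rewrite comp_idlE, nablaA_dlt, tens_comp_r, whiskerl_comp. reassoc.
    rw mm_nat_r. reflexivity. }
  assert (lift_l : assoc B B B ;; ((nabla ⊠ idm B) ;; ((dA ⊠ dA) ;; m B B))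
    = (dA ⊠ (dA ⊠ dA)) ;;
      ((idm _ ⊠ m B B) ;; (m B (B ⊗ B) ;; bm M (assoc B B B ;; (nabla ⊠ idm B))))).
  { rw <- tens_compE. rewrite comp_idlE, nablaA_dlt, tens_comp_l, whiskerr_comp. reassoc.
    rw mm_nat_l. rw <- assoc_natE. rw <- mm_assocE. rw <- bm_compE. reflexivity. }
  rewrite nablaA_unfold at 2 4. reassoc. rw lift_r. rw lift_l.
  rewrite <- !bm_compE, sum_counits_assoc. reassoc. reflexivity.
Qed.
End Bimonoid.

(** * The exponential lifting monad !A ⊗ - *)

Section ComonoidalMonad.
Context {C : ASMC} (M : MCM C) (A : ob C).
Local Notation K := (@unitob C).
Local Notation B := (bo M A).
Local Notation eA := (ee M A).
Local Notation DA := (Dl M A).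
Local Notation nabla := (nablaA M A).
Local Notation u := (uA M A).
Local Notation T := (TA M A).
Local Notation Tm := (TmA M A _ _).
Local Notation mu := (muA M A).
Local Notation eta := (etaA M A).
Local Notation n := (nA M A).
Local Notation nK := (nKA M A).
Implicit Types X Y Z : ob C.

Lemma TmA_id X : TmA M A X X (idm X) = idm (T X).
Proof. apply tens_idE. Qed.
Lemma TmA_comp {X Y Z} (f : hom X Y) (g : hom Y Z) : Tm (f ;; g) = Tm f ;; Tm g.
Proof. apply whiskerl_comp. Qed.

Lemma muA_nat {X Y} (f : hom X Y) : Tm (Tm f) ;; mu Y = mu X ;; Tm f.
Proof.
  unfold TmA, muA, TA. reassoc. rw assoc_natE.
  rewrite tens_idE, <- !tens_compE, !comp_idlE, !comp_idrE. reflexivity.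
Qed.
Lemma etaA_nat {X Y} (f : hom X Y) : f ;; eta Y = eta X ;; Tm f.
Proof.
  unfold TmA, etaA, TA. reassoc. rw lu_inv_natE.
  rewrite <- !tens_compE, !comp_idlE, !comp_idrE. reflexivity.
Qed.
Lemma muA_assoc X : Tm (mu X) ;; mu X = mu (T X) ;; mu X.
Proof.
  unfold TmA, muA, TA. rewrite whiskerl_comp. reassoc. rw assoc_natE.
  rw <- tens_compE. rewrite comp_idlE, <- (tens_idE B X). rw assoc_natE.
  rw <- tens_compE. rewrite comp_idlE. rw pentagonE. rw <- tens_compE.
  rewrite comp_idlE, nablaA_assoc. reassoc. reflexivity.
Qed.
Lemma etaA_muA X : eta (T X) ;; mu X = idm (T X).
Proof.
  unfold etaA, muA, TA. reassoc. rewrite <- (tens_idE B X). rw assoc_natE.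
  rw <- tens_compE. rewrite nablaA_unit_l, comp_idlE. rw assoc_lu.
  rewrite lu_invK, tens_idE. reflexivity.
Qed.
Lemma TmA_etaA_muA X : Tm (eta X) ;; mu X = idm (T X).
Proof.
  unfold TmA, etaA, muA, TA. rewrite whiskerl_comp. reassoc. rw assoc_natE.
  rw <- tens_compE. rewrite nablaA_unit_r, comp_idlE. rw triangleE.
  rw <- tens_compE. rewrite lu_invK, comp_idlE, tens_idE. reflexivity.
Qed.

Lemma nA_nat {X X' Y Y'} (f : hom X X') (g : hom Y Y') :
  Tm (f ⊠ g) ;; n X' Y' = n X Y ;; (Tm f ⊠ Tm g).
Proof.
  unfold TmA, nA, TA. reassoc. rw <- tens_compE.
  rewrite comp_idlE, comp_idrE, tens_split_l. reassoc. rewrite <- (tens_idE B B).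
  rw tau_natE. reflexivity.
Qed.
Lemma nA_coassoc X Y Z :
  Tm (assoc X Y Z) ;; n (X ⊗ Y) Z ;; (n X Y ⊠ idm (T Z))
  = n X (Y ⊗ Z) ;; (idm (T X) ⊠ n Y Z) ;; assoc (T X) (T Y) (T Z).
Proof.
  unfold TmA, nA, TA. reassoc. rw <- tens_compE. rewrite comp_idlE, comp_idrE.
  rewrite (whiskerr_comp (DA ⊠ idm (X ⊗ Y))). reassoc. rewrite <- (tens_idE B Z).
  rw <- tau_natE. rw <- (tens_compE DA _ (assoc X Y Z)). rewrite !tens_idE, comp_idrE.
  rewrite (whiskerl_comp (DA ⊠ idm (Y ⊗ Z))). reassoc. rewrite <- (tens_idE B X).
  rw <- tau_natE. rw <- (tens_compE DA).
  rewrite <- (comp_idrE (DA ;; (idm B ⊠ DA))), <- (assocK B B B). reassoc.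
  rw comonoid_coassocE. rewrite !tens_idE, comp_idlE.
  rewrite (tens_split_l (DA ;; (DA ⊠ idm B)) (assoc X Y Z)), !whiskerr_comp. reassoc.
  f_equal. f_equal. rw <- tau_assoc_inner. rw <- tens_compE.
  rewrite assoc_invK, comp_idlE. reflexivity.
Qed.
Lemma nA_lcounit X : n K X ;; (nK ⊠ idm (T X)) ;; lu (T X) = Tm (lu X).
Proof.
  unfold TmA, nA, nKA, TA. reassoc. rw <- ru_natE. rewrite whiskerr_comp. reassoc.
  rewrite <- (tens_idE B X). rw <- tau_natE. rw <- (tens_compE DA).
  rewrite (tens_idE B X). rw tau_lunit. rewrite tens_idE, comp_idlE.
  rw <- tens_compE. reassoc. rewrite comonoid_lcounitE, comp_idlE. reflexivity.
Qed.
Lemma nA_rcounit X : n X K ;; (idm (T X) ⊠ nK) ;; ru (T X) = Tm (ru X).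
Proof.
  unfold TmA, nA, nKA, TA. reassoc. rw <- ru_natE. rewrite whiskerl_comp. reassoc.
  rewrite <- (tens_idE B X). rw <- tau_natE. rw <- (tens_compE DA).
  rewrite (tens_idE B X). rw tau_runit. rewrite tens_idE, comp_idlE.
  rw <- tens_compE. reassoc. rewrite comonoid_rcounitE, comp_idlE. reflexivity.
Qed.
Lemma nA_sym X Y : n X Y ;; sym (T X) (T Y) = Tm (sym X Y) ;; n Y X.
Proof.
  unfold TmA, nA, TA. reassoc. rewrite tau_sym. rw <- tens_compE.
  rewrite comonoid_cocommE. rw <- tens_compE. rewrite !comp_idlE, !comp_idrE. reflexivity.
Qed.

Lemma muA_comonoidal X Y :
  mu (X ⊗ Y) ;; n X Y = Tm (n X Y) ;; n (T X) (T Y) ;; (mu X ⊠ mu Y).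
Proof.
  unfold TmA, nA, muA, TA. reassoc. rw <- (tens_compE nabla).
  rewrite comp_idlE, nablaA_Dl, !whiskerr_comp. reassoc. rewrite <- (tens_idE X Y).
  rw tau_natE. rw <- assoc_natE. rw <- (tens_compE (idm B)).
  rewrite comp_idlE, comp_idrE, tens_comp_r, tens_compE. reassoc. f_equal.
  rewrite (tens_idE X Y). rw tau_assoc_outer. reflexivity.
Qed.
Lemma muA_comonoidalK : mu K ;; nK = Tm nK ;; nK.
Proof.
  unfold TmA, nKA, muA, TA. reassoc. rw ru_natE. rewrite nablaA_ee.
  rw <- (ru_natE (eA ⊠ eA)). rw <- assoc_natE. rewrite whiskerl_comp. reassoc.
  rw <- (ru_natE eA). rw <- (tens_compE (idm B)). rewrite comp_idlE.
  rw <- (ru_natE eA). rewrite whiskerl_comp. reassoc. rw <- whisker_exchange.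
  rw <- (tens_compE (idm B)). rewrite comp_idlE, comp_idrE.
  f_equal. coherence. simpl_words. reflexivity.
Qed.
Lemma etaA_comonoidal X Y : eta (X ⊗ Y) ;; n X Y = eta X ⊠ eta Y.
Proof.
  unfold etaA, nA, TA. reassoc. rw <- (tens_compE u).
  rewrite uA_Dl, comp_idlE, whiskerr_comp. reassoc. rewrite <- (tens_idE X Y).
  rw tau_natE. rewrite tens_compE, (tens_idE X Y). rw tau_lu_inv. reflexivity.
Qed.
Lemma etaA_comonoidalK : eta K ;; nK = idm K.
Proof.
  unfold etaA, nKA, TA. reassoc. rw ru_natE. rw uA_ee.
  rewrite comp_idrE, <- lu_unitE. apply lu_invK.
Qed.

Lemma TA_sym_comonoidal_monad : sym_comonoidal_monad C T (TmA M A) mu eta n nK.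
Proof.
  constructor.
  - exact TmA_id.
  - exact @TmA_comp.
  - exact @muA_nat.
  - exact @etaA_nat.
  - exact muA_assoc.
  - exact etaA_muA.
  - exact TmA_etaA_muA.
  - exact @nA_nat.
  - exact nA_coassoc.
  - exact nA_lcounit.
  - exact nA_rcounit.
  - exact nA_sym.
  - exact muA_comonoidal.
  - exact muA_comonoidalK.
  - exact etaA_comonoidal.
  - exact etaA_comonoidalK.
Qed.
End ComonoidalMonad.

Section ExponentialLifting.
Context {C : ASMC} (M : MCM C) (A : ob C).
Local Notation K := (@unitob C).
Local Notation B := (bo M A).
Local Notation dA := (dlt M A).
Local Notation DA := (Dl M A).
Local Notation nabla := (nablaA M A).
Local Notation u := (uA M A).
Local Notation T := (TA M A).
Local Notation Tm := (TmA M A _ _).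
Local Notation lam := (lamA M A).
Implicit Types X Y : ob C.

Lemma lamA_nat {X Y} (f : hom X Y) : Tm (bm M f) ;; lam Y = lam X ;; bm M (Tm f).
Proof.
  unfold TmA, lamA, TA. reassoc. rw <- tens_compE.
  rewrite comp_idlE, comp_idrE, tens_split_l. reassoc. rw mm_nat_r. reflexivity.
Qed.
Lemma lamA_mu X :
  muA M A (bo M X) ;; lam X = Tm (lam X) ;; lam (T X) ;; bm M (muA M A X).
Proof.
  unfold TmA, lamA, muA, TA. reassoc. rw <- (tens_compE nabla).
  rewrite comp_idlE, nablaA_dlt, !whiskerr_comp. reassoc.
  rw mm_nat_l. rw <- assoc_natE. rw <- mm_assocE. rw <- bm_compE.
  rewrite whiskerl_comp. reassoc. rw <- whisker_exchange. rw <- (tens_compE (idm B)).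
  rewrite comp_idlE, comp_idrE. reflexivity.
Qed.
Lemma lamA_eta X : etaA M A (bo M X) ;; lam X = bm M (etaA M A X).
Proof.
  unfold etaA, lamA, TA. reassoc. rw <- (tens_compE u).
  rewrite uA_dlt, comp_idlE, whiskerr_comp. reassoc.
  rw mm_nat_l. rw mm_lunit_inv. rw lu_invK. rewrite comp_idlE, bm_compE. reflexivity.
Qed.
Lemma lamA_dlt X : Tm (dlt M X) ;; lam (bo M X) ;; bm M (lam X) = lam X ;; dlt M (T X).
Proof.
  unfold TmA, lamA, TA. reassoc. rw dlt_monE. rw <- (tens_compE (idm B)).
  rewrite comp_idlE, comp_idrE, bm_compE. rw <- mm_nat_l.
  rw <- (tens_compE dA). rewrite comp_idrE. rw <- tens_compE.
  rewrite comonad_coassocE, comp_idlE. reflexivity.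
Qed.
Lemma lamA_eps X : lam X ;; eps M (T X) = Tm (eps M X).
Proof.
  unfold TmA, lamA, TA. reassoc. rw eps_monE. rw <- tens_compE.
  rewrite comonad_counit1E, comp_idlE. reflexivity.
Qed.
Lemma lamA_mm X Y :
  nA M A (bo M X) (bo M Y) ;; (lam X ⊠ lam Y) ;; mm M (T X) (T Y)
  = Tm (mm M X Y) ;; lam (X ⊗ Y) ;; bm M (nA M A X Y).
Proof.
  unfold TmA, lamA, nA, TA. reassoc. rewrite (tens_compE (dA ⊠ idm _) _ (dA ⊠ idm _)).
  reassoc. rw <- tau_natE. rw mm_tau.
  rw <- (tens_compE DA). rw <- (tens_compE (DA ;; (dA ⊠ dA))). rewrite tens_idE, !comp_idlE.
  reassoc. rewrite bm_compE. rw <- (tens_compE (idm B)). rewrite comp_idlE, comp_idrE.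
  rw <- mm_nat_l. rw <- (tens_compE dA). rewrite comp_idrE, <- Dl_coalgE. reassoc.
  reflexivity.
Qed.
Lemma lamA_mK : nKA M A ;; mK M = Tm (mK M) ;; lam K ;; bm M (nKA M A).
Proof.
  unfold TmA, lamA, nKA, TA. reassoc. rewrite bm_compE. rw <- (tens_compE (idm B)).
  rewrite comp_idlE, comp_idrE, tens_split_l. reassoc.
  rw mm_runitE. rw ru_natE. rw <- ee_coalgE. reflexivity.
Qed.
End ExponentialLifting.

Theorem proposition7p5 (C : ASMC) (M : MCM C) (A : ob C) :
  exponential_lifting_monad C (mcm_data M) (TA M A) (TmA M A) (muA M A) (etaA M A)
    (nA M A) (nKA M A) (lamA M A).
Proof.
  constructor.
  - apply TA_sym_comonoidal_monad.
  - exact (@lamA_nat C M A).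
  - exact (lamA_mu M A).
  - exact (lamA_eta M A).
  - exact (lamA_dlt M A).
  - exact (lamA_eps M A).
  - exact (lamA_mm M A).
  - exact (lamA_mK M A).
Qed.
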